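(* In the isotropic setting below, let $F,F_p\in\mathrm{GL}^+(3)$, $C_p=F_p^TF_p$, $U_p=\sqrt{C_p}$, $R_p=F_pU_p^{-1}\in\mathrm{SO}(3)$. Then $$\mathring\Sigma=R_p^T\Sigma_eR_p=U_p^{-1}\widetilde\Sigma\,U_p,\qquad \widetilde\Sigma=U_p\mathring\Sigma\,U_p^{-1},\qquad \|\mathrm{dev}_3\mathring\Sigma\|=\|\mathrm{dev}_3\Sigma_e\|,$$ and $$\mathrm{tr}\big[(\mathrm{dev}_3\widetilde\Sigma)^2\big]=\|\mathrm{dev}_3(U_p^{-1}\widetilde\Sigma U_p)\|^2=\|\mathrm{dev}_3\mathring\Sigma\|^2\ge0.$$ In particular $\sqrt{\mathrm{tr}[(\mathrm{dev}_3\widetilde\Sigma)^2]}=\|\mathrm{dev}_3\Sigma_e\|=\|\mathrm{dev}_3\tau_e\|$ is well defined.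
   Context: $W:\mathrm{GL}^+(3)\to\mathbb{R}$ objective and isotropic ($W(QFR)=W(F)$, $Q,R\in\mathrm{SO}(3)$), written $W(F_e)=\Psi(I_1(C_e),I_2(C_e),I_3(C_e))$ with $\Psi\in C^1$; $\widetilde W(X)=\Psi(\mathrm{tr}X,\mathrm{tr}(\mathrm{Cof}X),\det X)$. $F_e=FF_p^{-1}$, $C=F^TF$, $C_e=F_e^TF_e$. $\langle X,Y\rangle=\mathrm{tr}(XY^T)$, $\|\cdot\|$ Frobenius norm, $D$ gradient, $\mathrm{dev}_3X=X-\frac13\mathrm{tr}(X)\mathbb{1}$, $\mathrm{sym}X=\frac12(X+X^T)$. $\Sigma_e=F_e^TDW(F_e)$, $\tau_e=DW(F_e)F_e^T$ (symmetric for isotropic $W$). $\widetilde\Sigma:=2\,C\,D\widetilde W(CC_p^{-1})\,C_p^{-1}$. Grandi–Stefanelli stress: $\mathring\Sigma:=2\,U_p^{-1}\,\mathrm{sym}\big[C\,D\widetilde W(CC_p^{-1})\big]\,U_p^{-1}\in\mathrm{Sym}(3)$. *)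

From Stdlib Require Export Reals.
Open Scope R_scope.

Record M3 : Type := mkM3 {
  m11 : R; m12 : R; m13 : R;
  m21 : R; m22 : R; m23 : R;
  m31 : R; m32 : R; m33 : R }.

Definition mId : M3 := mkM3 1 0 0 0 1 0 0 0 1.

Definition madd (A B : M3) : M3 :=
  mkM3 (m11 A + m11 B) (m12 A + m12 B) (m13 A + m13 B)
       (m21 A + m21 B) (m22 A + m22 B) (m23 A + m23 B)
       (m31 A + m31 B) (m32 A + m32 B) (m33 A + m33 B).

Definition mscal (s : R) (A : M3) : M3 :=
  mkM3 (s * m11 A) (s * m12 A) (s * m13 A)
       (s * m21 A) (s * m22 A) (s * m23 A)
       (s * m31 A) (s * m32 A) (s * m33 A).

Definition msub (A B : M3) : M3 := madd A (mscal (-1) B).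

Definition mmul (A B : M3) : M3 :=
  mkM3 (m11 A * m11 B + m12 A * m21 B + m13 A * m31 B)
       (m11 A * m12 B + m12 A * m22 B + m13 A * m32 B)
       (m11 A * m13 B + m12 A * m23 B + m13 A * m33 B)
       (m21 A * m11 B + m22 A * m21 B + m23 A * m31 B)
       (m21 A * m12 B + m22 A * m22 B + m23 A * m32 B)
       (m21 A * m13 B + m22 A * m23 B + m23 A * m33 B)
       (m31 A * m11 B + m32 A * m21 B + m33 A * m31 B)
       (m31 A * m12 B + m32 A * m22 B + m33 A * m32 B)
       (m31 A * m13 B + m32 A * m23 B + m33 A * m33 B).

Definition mtr (A : M3) : M3 :=
  mkM3 (m11 A) (m21 A) (m31 A)
       (m12 A) (m22 A) (m32 A)
       (m13 A) (m23 A) (m33 A).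

Definition trace (A : M3) : R := m11 A + m22 A + m33 A.

Definition det (A : M3) : R :=
  m11 A * (m22 A * m33 A - m23 A * m32 A)
  - m12 A * (m21 A * m33 A - m23 A * m31 A)
  + m13 A * (m21 A * m32 A - m22 A * m31 A).

(* cofactor matrix: Cof A = det A * A^{-T} *)
Definition cof (A : M3) : M3 :=
  mkM3 (m22 A * m33 A - m23 A * m32 A)
       (- (m21 A * m33 A - m23 A * m31 A))
       (m21 A * m32 A - m22 A * m31 A)
       (- (m12 A * m33 A - m13 A * m32 A))
       (m11 A * m33 A - m13 A * m31 A)
       (- (m11 A * m32 A - m12 A * m31 A))
       (m12 A * m23 A - m13 A * m22 A)
       (- (m11 A * m23 A - m13 A * m21 A))
       (m11 A * m22 A - m12 A * m21 A).

(* inverse (meaningful when det A <> 0) *)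
Definition minv (A : M3) : M3 := mscal (/ det A) (mtr (cof A)).

Definition inner (A B : M3) : R := trace (mmul A (mtr B)).
Definition mnorm (A : M3) : R := sqrt (inner A A).

Definition dev3 (A : M3) : M3 := msub A (mscal (trace A / 3) mId).
Definition msym (A : M3) : M3 := mscal (1/2) (madd A (mtr A)).

Definition symmetric (A : M3) : Prop := mtr A = A.

Definition qform (A : M3) (x y z : R) : R :=
  x * (m11 A * x + m12 A * y + m13 A * z)
  + y * (m21 A * x + m22 A * y + m23 A * z)
  + z * (m31 A * x + m32 A * y + m33 A * z).

Definition posdef (A : M3) : Prop :=
  forall x y z : R, ~ (x = 0 /\ y = 0 /\ z = 0) -> qform A x y z > 0.

Definition is_gradient (f : M3 -> R) (G : M3) (X : M3) : Prop :=
  forall eps : R, eps > 0 -> exists delta : R, delta > 0 /\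
    forall H : M3, mnorm H < delta ->
      Rabs (f (madd X H) - f X - inner G H) <= eps * mnorm H.

(* the open positive octant (0,oo)^3, domain of the invariants of SPD matrices *)
Definition octant (a b c : R) : Prop := 0 < a /\ 0 < b /\ 0 < c.

Definition cont3_octant (g : R -> R -> R -> R) : Prop :=
  forall a b c, octant a b c -> forall eps, eps > 0 -> exists delta, delta > 0 /\
    forall a' b' c', Rabs (a' - a) < delta -> Rabs (b' - b) < delta ->
      Rabs (c' - c) < delta -> Rabs (g a' b' c' - g a b c) < eps.

Definition C1_octant (Psi d1 d2 d3 : R -> R -> R -> R) : Prop :=
  (forall a b c, octant a b c ->
     derivable_pt_lim (fun t => Psi t b c) a (d1 a b c) /\
     derivable_pt_lim (fun t => Psi a t c) b (d2 a b c) /\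
     derivable_pt_lim (fun t => Psi a b t) c (d3 a b c)) /\
  cont3_octant d1 /\ cont3_octant d2 /\ cont3_octant d3.

Definition I1 (X : M3) : R := trace X.
Definition I2 (X : M3) : R := trace (cof X).
Definition I3 (X : M3) : R := det X.

Definition W_of (Psi : R -> R -> R -> R) (F : M3) : R :=
  let C := mmul (mtr F) F in Psi (I1 C) (I2 C) (I3 C).
Definition Wt_of (Psi : R -> R -> R -> R) (X : M3) : R :=
  Psi (trace X) (trace (cof X)) (det X).

(* Isotropy makes W~ invariant under X |-> X^T and under similarity X |-> A X A^-1.  Differentiating
   these invariances shows that D := DW~(Ce) is symmetric and commutes with Ce = Fe^T Fe, and that
   DW~(C Cp^-1) = Fp^-1 D Fp, because C Cp^-1 = Fp^T Ce Fp^-T is similar to Ce; the chain rule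
   through the Gram map gives DW(Fe) = 2 Fe D, hence Sigma_e = 2 Ce D is symmetric.  With
   Fp = Rp Up this turns the Grandi-Stefanelli stress into Rp^T Sigma_e Rp and Sigma~ into its
   conjugate by Up.  dev3 commutes with conjugation, the Frobenius norm is invariant under rotations,
   and tr[(dev3 Sigma~)^2] is a similarity invariant which, for the symmetric matrix dev3 Sigma_o,
   is its squared norm. *)

From Stdlib Require Import Lra Psatz.

(** * Matrix algebra *)

Definition mzero : M3 := mkM3 0 0 0 0 0 0 0 0 0.

Ltac m3_unfold :=
  cbv beta iota delta [mzero dev3 msym inner minv msub mmul madd mscal mtr mId trace det cof qform
                        m11 m12 m13 m21 m22 m23 m31 m32 m33] in *.

Ltac m3_ring :=
  intros; repeat match goal with A : M3 |- _ => destruct A end; m3_unfold;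
  lazymatch goal with
  | |- mkM3 _ _ _ _ _ _ _ _ _ = _ => f_equal; ring
  | _ => ring
  end.

Lemma mmul_assoc A B C : mmul (mmul A B) C = mmul A (mmul B C). Proof. m3_ring. Qed.
Lemma mmul_1l A : mmul mId A = A. Proof. m3_ring. Qed.
Lemma mmul_1r A : mmul A mId = A. Proof. m3_ring. Qed.
Lemma mmul_maddr A B C : mmul A (madd B C) = madd (mmul A B) (mmul A C). Proof. m3_ring. Qed.
Lemma mmul_maddl A B C : mmul (madd A B) C = madd (mmul A C) (mmul B C). Proof. m3_ring. Qed.
Lemma mmul_mscall s A B : mmul (mscal s A) B = mscal s (mmul A B). Proof. m3_ring. Qed.
Lemma mmul_mscalr s A B : mmul A (mscal s B) = mscal s (mmul A B). Proof. m3_ring. Qed.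
Lemma mscal_mscal s t A : mscal s (mscal t A) = mscal (s * t) A. Proof. m3_ring. Qed.
Lemma mscal_1 A : mscal 1 A = A. Proof. m3_ring. Qed.
Lemma madd_diag A : madd A A = mscal 2 A. Proof. m3_ring. Qed.
Lemma msub_eq0 A B : msub A B = mzero -> A = B.
Proof.
  destruct A, B; m3_unfold; intros E; injection E; intros.
  f_equal; lra.
Qed.

Lemma mtr_mtr A : mtr (mtr A) = A. Proof. m3_ring. Qed.
Lemma mtr_mmul A B : mtr (mmul A B) = mmul (mtr B) (mtr A). Proof. m3_ring. Qed.
Lemma mtr_mId : mtr mId = mId. Proof. m3_ring. Qed.
Lemma mtr_madd A B : mtr (madd A B) = madd (mtr A) (mtr B). Proof. m3_ring. Qed.
Lemma mtr_mscal s A : mtr (mscal s A) = mscal s (mtr A). Proof. m3_ring. Qed.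

Lemma trace_mtr A : trace (mtr A) = trace A. Proof. m3_ring. Qed.
Lemma trace_mmulC A B : trace (mmul A B) = trace (mmul B A). Proof. m3_ring. Qed.
Lemma trace_cof_mmulC A B : trace (cof (mmul A B)) = trace (cof (mmul B A)). Proof. m3_ring. Qed.
Lemma trace_cof_mtr A : trace (cof (mtr A)) = trace (cof A). Proof. m3_ring. Qed.
Lemma det_mmul A B : det (mmul A B) = det A * det B. Proof. m3_ring. Qed.
Lemma det_mtr A : det (mtr A) = det A. Proof. m3_ring. Qed.
Lemma det_mmulC A B : det (mmul A B) = det (mmul B A). Proof. rewrite !det_mmul; ring. Qed.

Lemma mmulKl A B X : mmul A B = mId -> mmul A (mmul B X) = X.
Proof. intros H; rewrite <- mmul_assoc, H, mmul_1l; reflexivity. Qed.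

Lemma minv_l A : det A <> 0 -> mmul (minv A) A = mId.
Proof. intros H; destruct A; m3_unfold; f_equal; field; exact H. Qed.
Lemma minv_r A : det A <> 0 -> mmul A (minv A) = mId.
Proof. intros H; destruct A; m3_unfold; f_equal; field; exact H. Qed.

Lemma minv_unique A B : det A <> 0 -> mmul A B = mId -> B = minv A.
Proof.
  intros HA H. rewrite <- (mmul_1l B), <- (minv_l A HA), mmul_assoc, H, mmul_1r.
  reflexivity.
Qed.

Lemma det_minv A : det A <> 0 -> det (minv A) = / det A.
Proof.
  intros HA. assert (H := f_equal det (minv_l A HA)).
  rewrite det_mmul in H. replace (det mId) with 1 in H by m3_ring.
  apply Rmult_eq_reg_r with (det A); [rewrite H; field|]; exact HA.
Qed.

Lemma minv_mtr A : det A <> 0 -> minv (mtr A) = mtr (minv A).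
Proof.
  intros HA. symmetry. apply minv_unique; [rewrite det_mtr; exact HA|].
  rewrite <- mtr_mmul, minv_l, mtr_mId; auto.
Qed.

Lemma minv_mmul A B : det A <> 0 -> det B <> 0 -> minv (mmul A B) = mmul (minv B) (minv A).
Proof.
  intros HA HB. symmetry. apply minv_unique.
  - rewrite det_mmul. apply Rmult_integral_contrapositive; auto.
  - rewrite mmul_assoc, (mmulKl B (minv B) _ (minv_r B HB)). apply minv_r; exact HA.
Qed.

Lemma symmetric_minv A : det A <> 0 -> symmetric A -> symmetric (minv A).
Proof. unfold symmetric; intros HA HS. rewrite <- minv_mtr, HS; auto. Qed.

Lemma orthogonal_mtr_r Q : mmul (mtr Q) Q = mId -> mmul Q (mtr Q) = mId.
Proof.
  intros H.
  assert (HQ : det Q <> 0).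
  { intros H0. assert (E := f_equal det H). rewrite det_mmul, H0 in E.
    replace (det mId) with 1 in E by m3_ring. lra. }
  assert (HT : det (mtr Q) <> 0) by (rewrite det_mtr; exact HQ).
  rewrite (minv_unique (mtr Q) Q HT H) at 1. apply minv_l. exact HT.
Qed.

(** * The Frobenius inner product *)

Lemma det_pos_of_posdef U : symmetric U -> posdef U -> det U > 0.
Proof.
  unfold symmetric; intros HS HP. destruct U as [a b c d e f g h i].
  m3_unfold. injection HS; intros.
  assert (Ha : qform (mkM3 a b c d e f g h i) 1 0 0 > 0) by (apply HP; lra).
  assert (Hb : qform (mkM3 a b c d e f g h i) (- b) a 0 > 0)
    by (apply HP; intros [K1 [K2 K3]]; m3_unfold; lra).
  m3_unfold.
  assert (Hminor : a * e - b * d > 0) by (subst; nra).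
  assert (Hv : qform (mkM3 a b c d e f g h i) (b * f - c * e) (- (a * f - c * d)) (a * e - b * d) > 0)
    by (apply HP; intros [K1 [K2 K3]]; lra).
  m3_unfold.
  (* the quadratic form at the third row of the adjugate equals det U times the leading 2x2 minor *)
  assert (Hprod : (a * (e * i - f * h) - b * (d * i - f * g) + c * (d * h - e * g)) * (a * e - b * d) > 0)
    by (subst; nra).
  nra.
Qed.

Lemma inner_self_ge0 A : 0 <= inner A A.
Proof. destruct A; m3_unfold; nra. Qed.

Lemma inner_self_eq0 A : inner A A = 0 -> A = mzero.
Proof.
  destruct A as [a1 a2 a3 a4 a5 a6 a7 a8 a9];  m3_unfold; intros H.
  f_equal; nra.
Qed.

Lemma inner_mscall s A B : inner (mscal s A) B = s * inner A B. Proof. m3_ring. Qed.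
Lemma inner_mscalr s A B : inner A (mscal s B) = s * inner A B. Proof. m3_ring. Qed.
Lemma inner_mtr A B : inner (mtr A) (mtr B) = inner A B. Proof. m3_ring. Qed.
Lemma inner_mtrl A B : inner (mtr A) B = inner A (mtr B). Proof. m3_ring. Qed.
Lemma inner_mmul_sandwich A G B H :
  inner (mmul (mmul (mtr A) G) (mtr B)) H = inner G (mmul (mmul A H) B).
Proof. m3_ring. Qed.

Lemma inner_symmetric_trace A : symmetric A -> inner A A = trace (mmul A A).
Proof. unfold symmetric, inner; intros HA; rewrite HA; reflexivity. Qed.

Lemma mnorm_ge0 A : 0 <= mnorm A. Proof. apply sqrt_pos. Qed.
Lemma mnorm_sqr A : mnorm A * mnorm A = inner A A. Proof. apply sqrt_sqrt, inner_self_ge0. Qed.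
Lemma mnorm_mtr A : mnorm (mtr A) = mnorm A. Proof. unfold mnorm; rewrite inner_mtr; reflexivity. Qed.

Lemma mnorm_mscal t A : mnorm (mscal t A) = Rabs t * mnorm A.
Proof.
  unfold mnorm. rewrite inner_mscall, inner_mscalr, <- Rmult_assoc, sqrt_mult_alt by nra.
  rewrite <- sqrt_Rsqr_abs. reflexivity.
Qed.

Lemma le_of_sqr_le x y : 0 <= y -> x * x <= y * y -> x <= y.
Proof. intros; nra. Qed.

Lemma inner_cauchy_schwarz_sqr A B : inner A B * inner A B <= inner A A * inner B B.
Proof.
  assert (Hq : forall t, 0 <= inner A A - 2 * t * inner A B + t * t * inner B B).
  { intros t. replace (inner A A - 2 * t * inner A B + t * t * inner B B)
      with (inner (msub A (mscal t B)) (msub A (mscal t B))) by m3_ring.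
    apply inner_self_ge0. }
  pose proof (inner_self_ge0 A). pose proof (inner_self_ge0 B).
  destruct (Req_dec (inner B B) 0) as [HB0|HB0].
  - assert (HAB : inner A B = 0) by (rewrite (inner_self_eq0 B HB0); m3_ring).
    rewrite HAB, HB0; lra.
  - specialize (Hq (inner A B / inner B B)).
    replace (inner A A - 2 * (inner A B / inner B B) * inner A B
             + inner A B / inner B B * (inner A B / inner B B) * inner B B)
      with ((inner A A * inner B B - inner A B * inner A B) / inner B B) in Hq by (field; lra).
    assert (HB : 0 < inner B B) by lra.
    apply Rmult_le_compat_r with (r := inner B B) in Hq; [|lra].
    unfold Rdiv in Hq. rewrite Rmult_assoc, Rinv_l, Rmult_0_l, Rmult_1_r in Hq by lra. lra.
Qed.

Lemma inner_cauchy_schwarz A B : Rabs (inner A B) <= mnorm A * mnorm B.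
Proof.
  apply le_of_sqr_le; [apply Rmult_le_pos; apply mnorm_ge0|].
  rewrite <- Rabs_mult, Rabs_pos_eq by nra.
  replace (mnorm A * mnorm B * (mnorm A * mnorm B)) with ((mnorm A * mnorm A) * (mnorm B * mnorm B)) by ring.
  rewrite !mnorm_sqr. apply inner_cauchy_schwarz_sqr.
Qed.

Lemma mnorm_madd_le A B : mnorm (madd A B) <= mnorm A + mnorm B.
Proof.
  pose proof (mnorm_ge0 A); pose proof (mnorm_ge0 B).
  apply le_of_sqr_le; [lra|].
  rewrite mnorm_sqr.
  replace (inner (madd A B) (madd A B)) with (inner A A + 2 * inner A B + inner B B) by m3_ring.
  pose proof (inner_cauchy_schwarz A B). pose proof (Rle_abs (inner A B)).
  rewrite <- (mnorm_sqr A), <- (mnorm_sqr B). nra.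
Qed.

Lemma cauchy_schwarz3 x1 x2 x3 y1 y2 y3 :
  (x1 * y1 + x2 * y2 + x3 * y3) * (x1 * y1 + x2 * y2 + x3 * y3)
  <= (x1 * x1 + x2 * x2 + x3 * x3) * (y1 * y1 + y2 * y2 + y3 * y3).
Proof.
  assert (Lagrange : (x1 * x1 + x2 * x2 + x3 * x3) * (y1 * y1 + y2 * y2 + y3 * y3)
      - (x1 * y1 + x2 * y2 + x3 * y3) * (x1 * y1 + x2 * y2 + x3 * y3)
    = (x1 * y2 - x2 * y1) * (x1 * y2 - x2 * y1) + (x1 * y3 - x3 * y1) * (x1 * y3 - x3 * y1)
      + (x2 * y3 - x3 * y2) * (x2 * y3 - x3 * y2)) by ring.
  pose proof (Rle_0_sqr (x1 * y2 - x2 * y1)); pose proof (Rle_0_sqr (x1 * y3 - x3 * y1));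
  pose proof (Rle_0_sqr (x2 * y3 - x3 * y2)); unfold Rsqr in *; lra.
Qed.

Lemma mnorm_mmul_le A B : mnorm (mmul A B) <= mnorm A * mnorm B.
Proof.
  apply le_of_sqr_le; [apply Rmult_le_pos; apply mnorm_ge0|].
  replace (mnorm A * mnorm B * (mnorm A * mnorm B)) with ((mnorm A * mnorm A) * (mnorm B * mnorm B)) by ring.
  rewrite !mnorm_sqr.
  destruct A as [a1 a2 a3 a4 a5 a6 a7 a8 a9], B as [b1 b2 b3 b4 b5 b6 b7 b8 b9]; m3_unfold.
  (* each entry of A B is a row of A against a column of B *)
  eapply Rle_trans; [repeat apply Rplus_le_compat; apply cauchy_schwarz3|].
  right; ring.
Qed.

(** * Gradients *)

Lemma Rmult_lt_of_lt_div c x d : 0 < c -> x < d / c -> c * x < d.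
Proof.
  intros Hc H. apply Rmult_lt_compat_l with (r := c) in H; [|exact Hc].
  replace (c * (d / c)) with d in H by (field; lra). exact H.
Qed.

Lemma eq0_of_le_eps a b : 0 <= b -> (forall eps, eps > 0 -> Rabs a <= eps * b) -> a = 0.
Proof.
  intros Hb H. destruct (Req_dec a 0) as [|Ha]; [assumption|exfalso].
  pose proof (Rabs_pos_lt a Ha).
  assert (Hle : Rabs a <= Rabs a / (2 * (b + 1)) * b) by (apply H, Rdiv_lt_0_compat; lra).
  replace (Rabs a / (2 * (b + 1)) * b) with (Rabs a * (b / (2 * (b + 1)))) in Hle by (field; lra).
  assert (b / (2 * (b + 1)) < 1) by (apply Rmult_lt_reg_r with (2 * (b + 1)); field_simplify; lra).
  nra.
Qed.

Lemma is_gradient_ext f g G X : (forall Y, f Y = g Y) -> is_gradient f G X -> is_gradient g G X.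
Proof.
  intros E H eps Heps. destruct (H eps Heps) as [d [Hd Hf]].
  exists d; split; [exact Hd|]. intros K HK. rewrite <- !E. auto.
Qed.

Lemma is_gradient_dir f G X K : is_gradient f G X -> forall eps, eps > 0 ->
  exists delta, delta > 0 /\ forall t, Rabs t < delta ->
    Rabs (f (madd X (mscal t K)) - f X - t * inner G K) <= eps * (Rabs t * mnorm K).
Proof.
  intros Hg eps Heps. destruct (Hg eps Heps) as [d [Hd Hf]].
  pose proof (mnorm_ge0 K).
  exists (d / (mnorm K + 1)). split; [apply Rdiv_lt_0_compat; lra|].
  intros t Ht. rewrite <- mnorm_mscal, <- inner_mscalr. apply Hf.
  rewrite mnorm_mscal. pose proof (Rabs_pos t).
  apply Rle_lt_trans with (Rabs t * (mnorm K + 1)); [nra|].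
  rewrite Rmult_comm. apply Rmult_lt_of_lt_div; [lra|exact Ht].
Qed.

Lemma is_gradient_dir_eq f g G1 G2 X K1 K2 : is_gradient f G1 X -> is_gradient g G2 X ->
  (forall t, f (madd X (mscal t K1)) - f X = g (madd X (mscal t K2)) - g X) ->
  inner G1 K1 = inner G2 K2.
Proof.
  intros H1 H2 E. apply Rminus_diag_uniq.
  pose proof (mnorm_ge0 K1); pose proof (mnorm_ge0 K2).
  apply eq0_of_le_eps with (mnorm K1 + mnorm K2); [lra|]. intros eps Heps.
  destruct (is_gradient_dir f G1 X K1 H1 eps Heps) as [d1 [Hd1 F1]].
  destruct (is_gradient_dir g G2 X K2 H2 eps Heps) as [d2 [Hd2 F2]].
  set (t := Rmin d1 d2 / 2).
  assert (Ht : 0 < t) by (unfold t; pose proof (Rmin_pos d1 d2 Hd1 Hd2); lra).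
  assert (Ht1 : Rabs t < d1) by (rewrite Rabs_pos_eq by lra; unfold t; pose proof (Rmin_l d1 d2); lra).
  assert (Ht2 : Rabs t < d2) by (rewrite Rabs_pos_eq by lra; unfold t; pose proof (Rmin_r d1 d2); lra).
  specialize (F1 t Ht1). specialize (F2 t Ht2).
  rewrite (Rabs_pos_eq t) in F1, F2 by lra. rewrite E in F1.
  assert (Hle : Rabs (t * (inner G1 K1 - inner G2 K2)) <= t * (eps * (mnorm K1 + mnorm K2))).
  { replace (t * (inner G1 K1 - inner G2 K2)) with
      (- (g (madd X (mscal t K2)) - g X - t * inner G1 K1)
       + (g (madd X (mscal t K2)) - g X - t * inner G2 K2)) by ring.
    eapply Rle_trans; [apply Rabs_triang|]. rewrite Rabs_Ropp. nra. }
  rewrite Rabs_mult, (Rabs_pos_eq t) in Hle by lra.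
  apply Rmult_le_reg_l with t; lra.
Qed.

Lemma is_gradient_unique f G G' X : is_gradient f G X -> is_gradient f G' X -> G = G'.
Proof.
  intros H1 H2. apply msub_eq0, inner_self_eq0.
  assert (E : inner G (msub G G') = inner G' (msub G G')) by (apply (is_gradient_dir_eq f f G G' X); auto).
  replace (inner (msub G G') (msub G G')) with (inner G (msub G G') - inner G' (msub G G')) by m3_ring.
  lra.
Qed.

Lemma is_gradient_mtr f G X : is_gradient f G (mtr X) -> is_gradient (fun Y => f (mtr Y)) (mtr G) X.
Proof.
  intros Hg eps Heps. destruct (Hg eps Heps) as [d [Hd Hf]]. exists d; split; [exact Hd|].
  intros H HH. rewrite mtr_madd, inner_mtrl, <- (mnorm_mtr H).
  apply Hf. rewrite mnorm_mtr; exact HH.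
Qed.

Lemma is_gradient_sandwich f G A B X : is_gradient f G (mmul (mmul A X) B) ->
  is_gradient (fun Y => f (mmul (mmul A Y) B)) (mmul (mmul (mtr A) G) (mtr B)) X.
Proof.
  intros Hg eps Heps.
  pose proof (mnorm_ge0 A) as HA; pose proof (mnorm_ge0 B) as HB.
  set (c := mnorm A * mnorm B + 1).
  assert (Hc : 0 < c) by (unfold c; nra).
  destruct (Hg (eps / c)) as [d [Hd Hf]]; [apply Rdiv_lt_0_compat; lra|].
  exists (d / c). split; [apply Rdiv_lt_0_compat; lra|].
  intros H HH. pose proof (mnorm_ge0 H).
  assert (Hn : mnorm (mmul (mmul A H) B) <= c * mnorm H).
  { eapply Rle_trans; [apply mnorm_mmul_le|]. pose proof (mnorm_mmul_le A H). unfold c; nra. }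
  rewrite mmul_maddr, mmul_maddl, inner_mmul_sandwich.
  eapply Rle_trans.
  - apply Hf. apply Rle_lt_trans with (c * mnorm H); [exact Hn|].
    apply Rmult_lt_of_lt_div; assumption.
  - apply Rle_trans with (eps / c * (c * mnorm H)).
    + apply Rmult_le_compat_l; [left; apply Rdiv_lt_0_compat; lra|exact Hn].
    + right; field; lra.
Qed.

Definition gram_increment (F H : M3) : M3 :=
  madd (madd (mmul (mtr F) H) (mmul (mtr H) F)) (mmul (mtr H) H).

Lemma gram_madd F H :
  mmul (mtr (madd F H)) (madd F H) = madd (mmul (mtr F) F) (gram_increment F H).
Proof. unfold gram_increment. m3_ring. Qed.

Lemma inner_gram_increment G F H :
  inner G (gram_increment F H) = inner (mmul F (madd G (mtr G))) H + inner G (mmul (mtr H) H).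
Proof. unfold gram_increment. m3_ring. Qed.

Lemma mnorm_gram_increment_le F H : mnorm H <= 1 ->
  mnorm (gram_increment F H) <= (2 * mnorm F + 1) * mnorm H.
Proof.
  intros H1. unfold gram_increment.
  pose proof (mnorm_ge0 F); pose proof (mnorm_ge0 H).
  pose proof (mnorm_madd_le (madd (mmul (mtr F) H) (mmul (mtr H) F)) (mmul (mtr H) H)).
  pose proof (mnorm_madd_le (mmul (mtr F) H) (mmul (mtr H) F)).
  pose proof (mnorm_mmul_le (mtr F) H). pose proof (mnorm_mmul_le (mtr H) F).
  pose proof (mnorm_mmul_le (mtr H) H).
  rewrite !mnorm_mtr in *. nra.
Qed.

Lemma is_gradient_gram g G F : is_gradient g G (mmul (mtr F) F) ->
  is_gradient (fun Y => g (mmul (mtr Y) Y)) (mmul F (madd G (mtr G))) F.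
Proof.
  intros Hg eps Heps.
  pose proof (mnorm_ge0 F) as HF; pose proof (mnorm_ge0 G) as HG.
  set (c := 2 * mnorm F + 1). set (k := mnorm G + 1).
  assert (Hc : 0 < c) by (unfold c; lra). assert (Hk : 0 < k) by (unfold k; lra).
  destruct (Hg (eps / (2 * c))) as [d [Hd Hf]]; [apply Rdiv_lt_0_compat; lra|].
  exists (Rmin 1 (Rmin (d / c) (eps / (2 * k)))).
  split; [repeat apply Rmin_pos; try lra; apply Rdiv_lt_0_compat; lra|].
  intros H HH. pose proof (mnorm_ge0 H).
  assert (H1 : mnorm H < 1) by (eapply Rlt_le_trans; [exact HH|apply Rmin_l]).
  assert (H2 : mnorm H < d / c) by (eapply Rlt_le_trans; [exact HH|eapply Rle_trans; [apply Rmin_r|apply Rmin_l]]).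
  assert (H3 : mnorm H < eps / (2 * k)) by (eapply Rlt_le_trans; [exact HH|eapply Rle_trans; [apply Rmin_r|apply Rmin_r]]).
  set (K := gram_increment F H).
  assert (HK : mnorm K <= c * mnorm H) by (apply mnorm_gram_increment_le; lra).
  assert (Hlin : Rabs (g (madd (mmul (mtr F) F) K) - g (mmul (mtr F) F) - inner G K)
                 <= eps / 2 * mnorm H).
  { eapply Rle_trans; [apply Hf; apply Rle_lt_trans with (c * mnorm H);
                        [exact HK|apply Rmult_lt_of_lt_div; assumption]|].
    apply Rle_trans with (eps / (2 * c) * (c * mnorm H)).
    - apply Rmult_le_compat_l; [left; apply Rdiv_lt_0_compat; lra|exact HK].
    - right; field; lra. }
  assert (Hquad : Rabs (inner G (mmul (mtr H) H)) <= eps / 2 * mnorm H).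
  { eapply Rle_trans; [apply inner_cauchy_schwarz|].
    pose proof (mnorm_mmul_le (mtr H) H). rewrite mnorm_mtr in *.
    assert (k * mnorm H < eps / 2)
      by (apply Rmult_lt_of_lt_div; [exact Hk|]; replace (eps / 2 / k) with (eps / (2 * k)) by (field; lra); exact H3).
    unfold k in *. nra. }
  rewrite gram_madd. fold K.
  replace (g (madd (mmul (mtr F) F) K) - g (mmul (mtr F) F) - inner (mmul F (madd G (mtr G))) H)
    with ((g (madd (mmul (mtr F) F) K) - g (mmul (mtr F) F) - inner G K) + inner G (mmul (mtr H) H))
    by (unfold K; rewrite inner_gram_increment; ring).
  eapply Rle_trans; [apply Rabs_triang|]. lra.
Qed.

(** * Isotropic energies *)

Lemma inner_self_gt0 A : A <> mzero -> 0 < inner A A.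
Proof.
  intros HA. destruct (inner_self_ge0 A) as [|H0]; [assumption|].
  exfalso. apply HA, inner_self_eq0. symmetry; exact H0.
Qed.

Lemma octant_gram G : det G <> 0 ->
  octant (trace (mmul (mtr G) G)) (trace (cof (mmul (mtr G) G))) (det (mmul (mtr G) G)).
Proof.
  intros HG. split; [|split].
  - replace (trace (mmul (mtr G) G)) with (inner G G) by m3_ring.
    apply inner_self_gt0. intros E. apply HG. rewrite E. m3_ring.
  - replace (trace (cof (mmul (mtr G) G))) with (inner (cof G) (cof G)) by m3_ring.
    apply inner_self_gt0. intros E. apply HG.
    assert (Laplace : 3 * det G = inner G (cof G)) by m3_ring.
    rewrite E in Laplace. replace (inner G mzero) with 0 in Laplace by m3_ring. lra.
  - rewrite det_mmul, det_mtr. destruct (Rtotal_order (det G) 0) as [|[|]]; nra.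
Qed.

Definition cyclic_invariant (h : M3 -> R) : Prop := forall A B, h (mmul A B) = h (mmul B A).

Lemma cyclic_invariant_similar h A Ai X : cyclic_invariant h -> mmul Ai A = mId ->
  h (mmul (mmul A X) Ai) = h X.
Proof. intros Hh HA. rewrite mmul_assoc, Hh, mmul_assoc, HA, mmul_1r. reflexivity. Qed.

Lemma octant_similar A Ai X : mmul Ai A = mId ->
  octant (trace (mmul (mmul A X) Ai)) (trace (cof (mmul (mmul A X) Ai))) (det (mmul (mmul A X) Ai)) ->
  octant (trace X) (trace (cof X)) (det X).
Proof.
  intros HA.
  pose proof (cyclic_invariant_similar trace A Ai X trace_mmulC HA) as Etr.
  pose proof (cyclic_invariant_similar (fun M => trace (cof M)) A Ai X trace_cof_mmulC HA) as Ecof.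
  pose proof (cyclic_invariant_similar det A Ai X det_mmulC HA) as Edet.
  cbv beta in Ecof. rewrite Etr, Ecof, Edet. trivial.
Qed.

Lemma Wt_of_cyclic_invariant Psi : cyclic_invariant (Wt_of Psi).
Proof. intros A B. unfold Wt_of. rewrite trace_mmulC, trace_cof_mmulC, det_mmulC. reflexivity. Qed.

Lemma Wt_of_mtr Psi A : Wt_of Psi (mtr A) = Wt_of Psi A.
Proof. unfold Wt_of. rewrite trace_mtr, trace_cof_mtr, det_mtr. reflexivity. Qed.

Lemma is_gradient_transpose_invariant f D X : (forall Y, f (mtr Y) = f Y) -> symmetric X ->
  is_gradient f D X -> symmetric D.
Proof.
  intros Hf HX Hg. symmetry. apply (is_gradient_unique f D (mtr D) X); [exact Hg|].
  apply (is_gradient_ext (fun Y => f (mtr Y))); [exact Hf|].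
  apply is_gradient_mtr. rewrite HX. exact Hg.
Qed.

(* Differentiate the identity f((1 + tS) X) = f(X (1 + tS)) at t = 0, with S the commutator of D and X^T. *)
Lemma is_gradient_cyclic_commute f D X : cyclic_invariant f -> is_gradient f D X ->
  mmul D (mtr X) = mmul (mtr X) D.
Proof.
  intros Hf Hg. set (S := msub (mmul D (mtr X)) (mmul (mtr X) D)).
  assert (E : inner D (mmul S X) = inner D (mmul X S)).
  { apply (is_gradient_dir_eq f f D D X); [exact Hg|exact Hg|]. intros t.
    replace (madd X (mscal t (mmul S X))) with (mmul (madd mId (mscal t S)) X) by m3_ring.
    replace (madd X (mscal t (mmul X S))) with (mmul X (madd mId (mscal t S))) by m3_ring.
    rewrite Hf. reflexivity. }
  apply msub_eq0, inner_self_eq0. fold S.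
  replace (inner S S) with (inner D (mmul S X) - inner D (mmul X S)) by (unfold S; m3_ring).
  lra.
Qed.

Lemma is_gradient_similar f D A Ai X : cyclic_invariant f -> mmul Ai A = mId ->
  is_gradient f D (mmul (mmul A X) Ai) -> is_gradient f (mmul (mmul (mtr A) D) (mtr Ai)) X.
Proof.
  intros Hf HA Hg. apply (is_gradient_ext (fun Y => f (mmul (mmul A Y) Ai))).
  - intros Y. apply cyclic_invariant_similar; assumption.
  - apply is_gradient_sandwich. exact Hg.
Qed.

Lemma is_gradient_W_of Psi D F : is_gradient (Wt_of Psi) D (mmul (mtr F) F) ->
  is_gradient (W_of Psi) (mmul F (madd D (mtr D))) F.
Proof. apply is_gradient_gram. Qed.

Lemma symmetric_gram A : symmetric (mmul (mtr A) A).
Proof. unfold symmetric. rewrite mtr_mmul, mtr_mtr. reflexivity. Qed.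

Lemma symmetric_mscal s M : symmetric M -> symmetric (mscal s M).
Proof. unfold symmetric; intros H. rewrite mtr_mscal, H. reflexivity. Qed.

Lemma symmetric_congruence A M : symmetric M -> symmetric (mmul (mmul (mtr A) M) A).
Proof.
  unfold symmetric; intros H.
  rewrite (mtr_mmul (mmul (mtr A) M) A), (mtr_mmul (mtr A) M), mtr_mtr, H, mmul_assoc.
  reflexivity.
Qed.

Lemma msym_symmetric Y : symmetric Y -> msym Y = Y.
Proof.
  unfold symmetric, msym; intros H.
  rewrite H, madd_diag, mscal_mscal. replace (1 / 2 * 2) with 1 by field. apply mscal_1.
Qed.

Lemma symmetric_dev3 M : symmetric M -> symmetric (dev3 M).
Proof. unfold symmetric, dev3, msub; intros H. rewrite mtr_madd, !mtr_mscal, mtr_mId, H. reflexivity. Qed.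

Lemma dev3_similar A Ai M : mmul Ai A = mId -> mmul A Ai = mId ->
  dev3 (mmul (mmul A M) Ai) = mmul (mmul A (dev3 M)) Ai.
Proof.
  intros HA HA'. unfold dev3, msub.
  rewrite (cyclic_invariant_similar trace A Ai M trace_mmulC HA).
  rewrite mmul_maddr, mmul_maddl, !mmul_mscalr, !mmul_mscall, mmul_1r, HA'. reflexivity.
Qed.

Lemma mnorm_dev3_sqr M : mnorm (dev3 M) * mnorm (dev3 M) = inner M M - trace M * trace M / 3.
Proof. rewrite mnorm_sqr. destruct M; m3_unfold; field. Qed.

Lemma mnorm_dev3_orthogonal_conj Q M : mmul (mtr Q) Q = mId ->
  mnorm (dev3 (mmul (mmul (mtr Q) M) Q)) = mnorm (dev3 M).
Proof.
  intros HQ. pose proof (orthogonal_mtr_r Q HQ) as HQ'.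
  rewrite <- (mtr_mtr Q) in HQ' at 2.
  apply Rsqr_inj; try apply mnorm_ge0. unfold Rsqr. rewrite !mnorm_dev3_sqr.
  rewrite (cyclic_invariant_similar trace (mtr Q) Q M trace_mmulC HQ').
  replace (inner (mmul (mmul (mtr Q) M) Q) (mmul (mmul (mtr Q) M) Q)) with (inner M M); [reflexivity|].
  unfold inner. rewrite !mtr_mmul, mtr_mtr, <- (cyclic_invariant_similar trace (mtr Q) Q (mmul M (mtr M)) trace_mmulC HQ').
  rewrite !mmul_assoc, (mmulKl Q (mtr Q) _ (orthogonal_mtr_r Q HQ)). reflexivity.
Qed.

Lemma similar_conj_cancel A Ai M : mmul Ai A = mId ->
  mmul (mmul Ai (mmul (mmul A M) Ai)) A = M.
Proof. intros HA. rewrite !mmul_assoc, (mmulKl Ai A _ HA), HA, mmul_1r. reflexivity. Qed.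

Lemma trace_sqr_dev3_similar A Ai M : mmul Ai A = mId -> mmul A Ai = mId -> symmetric M ->
  trace (mmul (dev3 (mmul (mmul A M) Ai)) (dev3 (mmul (mmul A M) Ai))) = mnorm (dev3 M) ^ 2.
Proof.
  intros HA HA' HM. rewrite (dev3_similar A Ai M HA HA').
  rewrite !mmul_assoc, (mmulKl Ai A _ HA), <- (mmul_assoc (dev3 M)), <- mmul_assoc.
  rewrite (cyclic_invariant_similar trace A Ai _ trace_mmulC HA).
  rewrite <- inner_symmetric_trace, <- mnorm_sqr by (apply symmetric_dev3; exact HM). ring.
Qed.

(* For symmetric X, |X|^2 = tr(X^2), and tr((A^T B)^2) = tr((B A^T)^2) by cyclicity. *)
Lemma mnorm_dev3_cyclic A B : symmetric (mmul (mtr A) B) -> symmetric (mmul B (mtr A)) ->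
  mnorm (dev3 (mmul (mtr A) B)) = mnorm (dev3 (mmul B (mtr A))).
Proof.
  intros H1 H2. apply Rsqr_inj; try apply mnorm_ge0. unfold Rsqr.
  rewrite !mnorm_dev3_sqr, !inner_symmetric_trace by assumption.
  rewrite (trace_mmulC (mtr A) B), !mmul_assoc, (trace_mmulC (mtr A)), !mmul_assoc. reflexivity.
Qed.

Lemma polar_factor_rotation Fp Up : det Fp > 0 -> symmetric Up -> posdef Up ->
  mmul Up Up = mmul (mtr Fp) Fp ->
  mmul (mtr (mmul Fp (minv Up))) (mmul Fp (minv Up)) = mId /\ det (mmul Fp (minv Up)) = 1.
Proof.
  intros HFp HUs HUpd HUsq.
  pose proof (det_pos_of_posdef Up HUs HUpd) as HUp.
  assert (nUp : det Up <> 0) by lra.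
  split.
  - rewrite mtr_mmul, (symmetric_minv Up nUp HUs), !mmul_assoc, <- (mmul_assoc (mtr Fp)), <- HUsq.
    rewrite mmul_assoc, (mmulKl (minv Up) Up _ (minv_l Up nUp)). apply minv_r; exact nUp.
  - assert (Hdet : det Up = det Fp).
    { assert (E := f_equal det HUsq). rewrite !det_mmul, det_mtr in E. nra. }
    rewrite det_mmul, det_minv, Hdet by exact nUp. field. lra.
Qed.

(** * Stresses *)

Section Stresses.

Variables (Psi : R -> R -> R -> R) (DW DWt : M3 -> M3) (F Fp Up : M3).
Hypothesis HDW : forall X, det X > 0 -> is_gradient (W_of Psi) (DW X) X.
Hypothesis HDWt : forall X, octant (trace X) (trace (cof X)) (det X) ->
  is_gradient (Wt_of Psi) (DWt X) X.
Hypothesis HF : det F > 0.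
Hypothesis HFp : det Fp > 0.
Hypothesis HUp_sym : symmetric Up.
Hypothesis HUp_pd : posdef Up.
Hypothesis HUp_sq : mmul Up Up = mmul (mtr Fp) Fp.

Local Notation C := (mmul (mtr F) F).
Local Notation Cp := (mmul (mtr Fp) Fp).
Local Notation Fe := (mmul F (minv Fp)).
Local Notation Ce := (mmul (mtr Fe) Fe).
Local Notation Rp := (mmul Fp (minv Up)).

Let nFp : det Fp <> 0. Proof. lra. Qed.
Let nUp : det Up <> 0. Proof. pose proof (det_pos_of_posdef Up HUp_sym HUp_pd); lra. Qed.

Lemma det_Fe_pos : det Fe > 0.
Proof.
  rewrite det_mmul, det_minv by exact nFp.
  apply Rmult_gt_0_compat; [exact HF|apply Rinv_0_lt_compat; exact HFp].
Qed.

Lemma is_gradient_Wt_Ce : is_gradient (Wt_of Psi) (DWt Ce) Ce.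
Proof. apply HDWt, octant_gram. pose proof det_Fe_pos; lra. Qed.

Lemma symmetric_DWt_Ce : symmetric (DWt Ce).
Proof.
  apply (is_gradient_transpose_invariant (Wt_of Psi) _ Ce (Wt_of_mtr Psi)).
  - apply symmetric_gram.
  - exact is_gradient_Wt_Ce.
Qed.

Lemma DWt_Ce_commute : mmul (DWt Ce) Ce = mmul Ce (DWt Ce).
Proof.
  pose proof (is_gradient_cyclic_commute _ _ _ (Wt_of_cyclic_invariant Psi) is_gradient_Wt_Ce) as E.
  rewrite (symmetric_gram Fe) in E. exact E.
Qed.

Lemma symmetric_Ce_DWt_Ce : symmetric (mmul Ce (DWt Ce)).
Proof.
  pose proof symmetric_DWt_Ce as HD. unfold symmetric in *.
  rewrite mtr_mmul, HD, (symmetric_gram Fe). exact DWt_Ce_commute.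
Qed.

Lemma DW_Fe : DW Fe = mscal 2 (mmul Fe (DWt Ce)).
Proof.
  pose proof symmetric_DWt_Ce as HD; unfold symmetric in HD.
  rewrite <- mmul_mscalr, <- madd_diag.
  replace (madd (DWt Ce) (DWt Ce)) with (madd (DWt Ce) (mtr (DWt Ce))) by (rewrite HD; reflexivity).
  apply (is_gradient_unique (W_of Psi) _ _ Fe).
  - apply HDW, det_Fe_pos.
  - apply is_gradient_W_of, is_gradient_Wt_Ce.
Qed.

Lemma minv_Cp : minv Cp = mmul (minv Fp) (mtr (minv Fp)).
Proof. rewrite minv_mmul, minv_mtr; [reflexivity|exact nFp|rewrite det_mtr; exact nFp|exact nFp]. Qed.

Lemma mmul_C_minv_Fp : mmul C (minv Fp) = mmul (mtr Fp) Ce.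
Proof.
  rewrite mtr_mmul, <- !mmul_assoc, <- mtr_mmul, (minv_l Fp nFp), mtr_mId, mmul_1l.
  reflexivity.
Qed.

Lemma DWt_C_Cp : DWt (mmul C (minv Cp)) = mmul (mmul (minv Fp) (DWt Ce)) Fp.
Proof.
  assert (Hsim : mmul (mmul (mtr (minv Fp)) (mmul C (minv Cp))) (mtr Fp) = Ce).
  { rewrite minv_Cp, !mmul_assoc, <- (mtr_mmul Fp (minv Fp)), (minv_r Fp nFp), mtr_mId, mmul_1r.
    rewrite (mtr_mmul F), !mmul_assoc. reflexivity. }
  assert (HA : mmul (mtr Fp) (mtr (minv Fp)) = mId)
    by (rewrite <- mtr_mmul, (minv_l Fp nFp); apply mtr_mId).
  pose proof (is_gradient_similar _ (DWt Ce) _ _ (mmul C (minv Cp)) (Wt_of_cyclic_invariant Psi) HA) as Hg.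
  rewrite Hsim, !mtr_mtr in Hg.
  apply (is_gradient_unique (Wt_of Psi) _ _ (mmul C (minv Cp))); [|exact (Hg is_gradient_Wt_Ce)].
  apply HDWt, (octant_similar _ _ _ HA). rewrite Hsim. apply octant_gram. pose proof det_Fe_pos; lra.
Qed.

Lemma mmul_C_DWt : mmul C (DWt (mmul C (minv Cp))) = mmul (mmul (mtr Fp) (mmul Ce (DWt Ce))) Fp.
Proof.
  rewrite DWt_C_Cp, <- (mmul_assoc C), <- (mmul_assoc C), mmul_C_minv_Fp, (mmul_assoc (mtr Fp) Ce).
  reflexivity.
Qed.

Lemma Sigma_e_eq : mmul (mtr Fe) (DW Fe) = mscal 2 (mmul Ce (DWt Ce)).
Proof. rewrite DW_Fe, mmul_mscalr, <- mmul_assoc. reflexivity. Qed.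

Lemma Sigma_o_eq :
  mscal 2 (mmul (mmul (minv Up) (msym (mmul C (DWt (mmul C (minv Cp)))))) (minv Up))
  = mmul (mmul (mtr Rp) (mmul (mtr Fe) (DW Fe))) Rp.
Proof.
  rewrite mmul_C_DWt, msym_symmetric.
  - rewrite Sigma_e_eq, (mtr_mmul Fp), (symmetric_minv Up nUp HUp_sym).
    repeat rewrite ?mmul_mscalr, ?mmul_mscall.
    rewrite !mmul_assoc. reflexivity.
  - apply symmetric_congruence, symmetric_Ce_DWt_Ce.
Qed.

Lemma Sigma_t_eq :
  mscal 2 (mmul (mmul C (DWt (mmul C (minv Cp)))) (minv Cp))
  = mmul (mmul Up (mmul (mmul (mtr Rp) (mmul (mtr Fe) (DW Fe))) Rp)) (minv Up).
Proof.
  rewrite mmul_C_DWt, <- HUp_sq, minv_mmul by exact nUp.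
  rewrite Sigma_e_eq, (mtr_mmul Fp), (symmetric_minv Up nUp HUp_sym).
  repeat rewrite ?mmul_mscalr, ?mmul_mscall.
  rewrite !mmul_assoc, (mmulKl Up (minv Up) _ (minv_r Up nUp)).
  reflexivity.
Qed.

Lemma symmetric_Sigma_e : symmetric (mmul (mtr Fe) (DW Fe)).
Proof. rewrite Sigma_e_eq. apply symmetric_mscal, symmetric_Ce_DWt_Ce. Qed.

Lemma mnorm_dev3_Sigma_e_tau_e :
  mnorm (dev3 (mmul (mtr Fe) (DW Fe))) = mnorm (dev3 (mmul (DW Fe) (mtr Fe))).
Proof.
  apply mnorm_dev3_cyclic.
  - exact symmetric_Sigma_e.
  - rewrite DW_Fe, mmul_mscall. apply symmetric_mscal.
    pose proof (symmetric_congruence (mtr Fe) _ symmetric_DWt_Ce) as H.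
    rewrite mtr_mtr in H. exact H.
Qed.

End Stresses.

Theorem mainTheorem8
  (Psi d1 d2 d3 : R -> R -> R -> R)
  (HPsi : C1_octant Psi d1 d2 d3)
  (DW DWt : M3 -> M3)
  (HDW : forall X, det X > 0 -> is_gradient (W_of Psi) (DW X) X)
  (HDWt : forall X, octant (trace X) (trace (cof X)) (det X) ->
            is_gradient (Wt_of Psi) (DWt X) X)
  (F Fp Up : M3)
  (HF : det F > 0) (HFp : det Fp > 0)
  (HUp_sym : symmetric Up) (HUp_pd : posdef Up)
  (HUp_sq : mmul Up Up = mmul (mtr Fp) Fp) :
  let C := mmul (mtr F) F in
  let Cp := mmul (mtr Fp) Fp in
  let Rp := mmul Fp (minv Up) in
  let Fe := mmul F (minv Fp) in
  let Sigma_e := mmul (mtr Fe) (DW Fe) in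
  let tau_e := mmul (DW Fe) (mtr Fe) in
  let Sigma_t := mscal 2 (mmul (mmul C (DWt (mmul C (minv Cp)))) (minv Cp)) in
  let Sigma_o := mscal 2 (mmul (mmul (minv Up)
                   (msym (mmul C (DWt (mmul C (minv Cp)))))) (minv Up)) in
  (mmul (mtr Rp) Rp = mId /\ det Rp = 1) /\
  Sigma_o = mmul (mmul (mtr Rp) Sigma_e) Rp /\
  mmul (mmul (mtr Rp) Sigma_e) Rp = mmul (mmul (minv Up) Sigma_t) Up /\
  Sigma_t = mmul (mmul Up Sigma_o) (minv Up) /\
  mnorm (dev3 Sigma_o) = mnorm (dev3 Sigma_e) /\
  trace (mmul (dev3 Sigma_t) (dev3 Sigma_t))
    = (mnorm (dev3 (mmul (mmul (minv Up) Sigma_t) Up))) ^ 2 /\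
  (mnorm (dev3 (mmul (mmul (minv Up) Sigma_t) Up))) ^ 2
    = (mnorm (dev3 Sigma_o)) ^ 2 /\
  (mnorm (dev3 Sigma_o)) ^ 2 >= 0 /\
  sqrt (trace (mmul (dev3 Sigma_t) (dev3 Sigma_t))) = mnorm (dev3 Sigma_e) /\
  mnorm (dev3 Sigma_e) = mnorm (dev3 tau_e).
Proof.
  cbv zeta.
  rewrite (Sigma_o_eq Psi DW DWt F Fp Up), (Sigma_t_eq Psi DW DWt F Fp Up) by assumption.
  rewrite <- (mnorm_dev3_Sigma_e_tau_e Psi DW DWt F Fp) by assumption.
  destruct (polar_factor_rotation Fp Up HFp HUp_sym HUp_pd HUp_sq) as [HRp HdetRp].
  set (Rp := mmul Fp (minv Up)) in *.
  set (Sigma_e := mmul (mtr (mmul F (minv Fp))) (DW (mmul F (minv Fp)))).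
  set (S := mmul (mmul (mtr Rp) Sigma_e) Rp).
  assert (nUp : det Up <> 0) by (pose proof (det_pos_of_posdef Up HUp_sym HUp_pd); lra).
  assert (HS : symmetric S)
    by (apply symmetric_congruence, (symmetric_Sigma_e Psi DW DWt F Fp); assumption).
  rewrite (similar_conj_cancel _ _ _ (minv_l Up nUp)).
  rewrite (trace_sqr_dev3_similar _ _ _ (minv_l Up nUp) (minv_r Up nUp) HS).
  assert (Hnorm : mnorm (dev3 S) = mnorm (dev3 Sigma_e)) by apply (mnorm_dev3_orthogonal_conj Rp _ HRp).
  rewrite Hnorm, sqrt_pow2 by apply mnorm_ge0.
  repeat split; try reflexivity; try assumption.
  apply Rle_ge, pow2_ge_0.
Qed.
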